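(* Let $\mathcal{H}(T^2)=\hat{\mathcal{O}}_{\mathbb{Q}}$ be the $\mathbb{C}_q$-module of (possibly infinite) formal sums $\sum_{n,m\in\mathbb{Q}}c_{n,m}Y^nX^m$ with $c_{n,m}\in\mathbb{C}_q$. For $\gamma=\begin{pmatrix} a & b\\ c & d\end{pmatrix}\in SL(2,\mathbb{Z})$ let $\rho(\gamma)$ be the $\mathbb{C}_q$-linear map on $\mathcal{H}(T^2)$ defined termwise on basis elements by $$\rho(\gamma)(Y^nX^m)=q^{-abm^2-2bcmn-cdn^2}\,Y^{bm+dn}X^{am+cn}\qquad(m,n\in\mathbb{Q}).$$ Then this representation of $SL(2,\mathbb{Z})$ on $\mathcal{H}(T^2)$ is faithful: if $\rho(\gamma)=\rho(\gamma')$ then $\gamma=\gamma'$.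
   Context: $\mathbb{C}_q$ denotes the algebraic closure of the field $\mathbb{C}((q))$ of formal Laurent series in $q$. The symbols $Y^nX^m$ ($m,n\in\mathbb{Q}$) are formal basis elements (ordered monomials in the quantum torus with $X^\lambda Y^\mu=q^{-2\lambda\mu}Y^\mu X^\lambda$), and elements of $\hat{\mathcal{O}}_{\mathbb{Q}}$ are arbitrary formal $\mathbb{C}_q$-linear combinations of them, with infinitely many nonzero coefficients allowed; $\rho(\gamma)$ acts coefficientwise on such sums. *)

From HB Require Import structures.
From mathcomp Require Import all_boot all_order all_algebra.
Set Implicit Arguments. Unset Strict Implicit. Unset Printing Implicit Defensive.
Import Order.TTheory GRing.Theory Num.Theory.
Local Open Scope ring_scope.

(* Coefficient field: an arbitrary field K (instantiated by C_q) together with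
   a choice of rational powers of q, i.e. a group morphism (Q,+) -> K^x,
   r |-> q^r. *)
Definition qpow_hom (K : fieldType) (qpow : rat -> K) : Prop :=
  qpow 0 = 1 /\ forall r s : rat, qpow (r + s) = qpow r * qpow s.

(* Elements of H(T^2) = \hat O_Q : arbitrary formal sums
   sum_{n,m in Q} c_{n,m} Y^n X^m, represented by their coefficient
   function (n, m) |-> c_{n,m}. *)
Definition Hmod (K : fieldType) := rat -> rat -> K.

Definition SL2Z (g : 'M[int]_2) : Prop := \det g = 1.

Definition ea (g : 'M[int]_2) : rat := (g 0 0)%:~R.
Definition eb (g : 'M[int]_2) : rat := (g 0 1)%:~R.
Definition ec (g : 'M[int]_2) : rat := (g 1 0)%:~R.
Definition ed (g : 'M[int]_2) : rat := (g 1 1)%:~R.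

Definition rho_exp (g : 'M[int]_2) (n m : rat) : rat :=
  - (ea g * eb g * m ^+ 2) - 2 * eb g * ec g * m * n - ec g * ed g * n ^+ 2.

(* rho(gamma) acting coefficientwise: the basis element Y^n X^m is sent to
   q^{rho_exp} Y^{bm+dn} X^{am+cn}.  For gamma in SL(2,Z) the exponent map
   (n,m) |-> (bm+dn, am+cn) is a bijection of Q^2 with inverse
   (N,M) |-> (aN - bM, dM - cN), so the coefficient of Y^N X^M in
   rho(gamma)(f) is q^{rho_exp n m} * c_{n,m} for that unique preimage. *)
Definition rho (K : fieldType) (qpow : rat -> K) (g : 'M[int]_2)
    (f : Hmod K) : Hmod K :=
  fun N M =>
    let n := ea g * N - eb g * M in
    let m := ed g * M - ec g * N in
    qpow (rho_exp g n m) * f n m.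

From HB Require Import structures.
From mathcomp Require Import all_boot all_order all_algebra.
Import Order.TTheory GRing.Theory Num.Theory.
Local Open Scope ring_scope.

(* Apply rho(gamma) to a single monomial Y^n X^m: since every q^r is nonzero,
   the only nonzero coefficient of the image sits at the image of (n, m) under
   the exponent map of gamma, so rho(gamma) determines that map and hence its
   inverse (N, M) |-> (aN - bM, dM - cN).  The inverse sends (1, 0) and (0, 1)
   to (a, -c) and (-b, d), which recovers gamma. *)

Lemma qpow_neq0 {K : fieldType} {qpow : rat -> K} (hq : qpow_hom qpow) (r : rat) :
  qpow r != 0.
Proof.
case: hq => qpow0 qpowD; apply/eqP => qr0.
by have /eqP := qpowD r (- r); rewrite subrr qpow0 qr0 mul0r oner_eq0.
Qed.

Definition monomial (K : fieldType) (n0 m0 : rat) : Hmod K :=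
  fun n m => ((n == n0) && (m == m0))%:R.

Definition rho_src (g : 'M[int]_2) (N M : rat) : rat * rat :=
  (ea g * N - eb g * M, ed g * M - ec g * N).

Lemma rho_monomial_neq0 {K : fieldType} {qpow : rat -> K} (hq : qpow_hom qpow)
    (g : 'M[int]_2) (n0 m0 N M : rat) :
  (rho qpow g (monomial K n0 m0) N M != 0) = (rho_src g N M == (n0, m0)).
Proof.
rewrite /rho /monomial xpair_eqE mulf_eq0 negb_or qpow_neq0 //=.
by case: (_ && _); rewrite ?oner_eq0 ?eqxx.
Qed.

Lemma rho_src_eq {K : fieldType} {qpow : rat -> K} (hq : qpow_hom qpow)
    (g g' : 'M[int]_2) :
  rho qpow g = rho qpow g' -> rho_src g =2 rho_src g'.
Proof.
move=> rho_gg' N M; case src_g'NM: (rho_src g' N M) => [n0 m0].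
have := rho_monomial_neq0 hq g n0 m0 N M.
by rewrite rho_gg' rho_monomial_neq0 // src_g'NM eqxx => /esym/eqP.
Qed.

Lemma eq_mx2 (R : Type) (A B : 'M[R]_2) :
  A 0 0 = B 0 0 -> A 0 1 = B 0 1 -> A 1 0 = B 1 0 -> A 1 1 = B 1 1 -> A = B.
Proof.
have ord2E (i : 'I_2) : i = 0 \/ i = 1.
  by case: i => [[|[|//]] ?]; [left | right]; apply: val_inj.
move=> e00 e01 e10 e11; apply/matrixP => i j.
by case: (ord2E i) => ->; case: (ord2E j) => ->.
Qed.

Lemma rho_src_inj (g g' : 'M[int]_2) : rho_src g =2 rho_src g' -> g = g'.
Proof.
move=> src_gg'; move: (src_gg' 1 0) (src_gg' 0 1).
rewrite /rho_src !mulr1 !mulr0 !subr0 !sub0r /ea /eb /ec /ed.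
by case=> /intr_inj e00 /oppr_inj/intr_inj e10 [/oppr_inj/intr_inj e01 /intr_inj e11];
  apply: eq_mx2.
Qed.

Theorem mainTheorem2 (K : fieldType) (qpow : rat -> K)
    (hq : qpow_hom qpow) (g g' : 'M[int]_2) :
  SL2Z g -> SL2Z g' -> rho qpow g = rho qpow g' -> g = g'.
Proof.
by move=> _ _ /(rho_src_eq hq); apply: rho_src_inj.
Qed.
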